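(* Let $\Lambda=k(\Gamma,\mathcal{A})$ be a generalized path algebra without relations. Let $i\in\Gamma_0$, $1\le j\le s_i$, and let $((M_l)_{l\in\Gamma_0},(\phi_\alpha)_{\alpha\in\Gamma_1})$ be the representation of $P(i,j)=\overline{e_{ij}}\Lambda$. Then: - $M_i=P_i^j=e_{ij}A_i$; - for $l\neq i$, $M_l\cong A_l^{n_l}$ as $A_l$-modules, where $$n_l=\sum_{\gamma:\,i=i_0\to i_1\to\cdots\to i_r=l}(\dim_kP_i^j)(\dim_kA_{i_1})\cdots(\dim_kA_{i_{r-1}}),$$ summed over all paths $\gamma$ from $i$ to $l$ in $\Gamma$. In particular $M_l=0$ if there is no path from $i$ to $l$.
   Context: $k$ is an algebraically closed field, $\Gamma$ a finite acyclic quiver, and $\mathcal{A}=\{A_i:i\in\Gamma_0\}$ finite-dimensional basic $k$-algebras. The generalized path algebra $k(\Gamma,\mathcal{A})$ is spanned by $\mathcal{A}$-paths $a_1\beta_1\cdots a_n\beta_na_{n+1}$ ($\beta_1\cdots\beta_n$ a path of $\Gamma$, $a_i\in A_{s(\beta_i)}$, $a_{n+1}\in A_{e(\beta_n)}$), modulo multilinearity, with concatenation product (multiplying adjacent algebra entries, or $0$ if paths don't compose). For each $i$, $\{e_{i1},\dots,e_{is_i}\}$ is a complete set of primitive pairwise orthogonal idempotents of $A_i$. $P_i^j=e_{ij}A_i$, and $\overline{e_{ij}}$ is the class of $e_{ij}$ in $\Lambda$. The representation of a right $\Lambda$-module $X$ has $X_l=X\cdot1_l$ ($1_l$ the identity of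 $A_l$) and $\phi_\alpha(x)=x\alpha$. *)

From HB Require Import structures.
From mathcomp Require Import all_boot all_order all_algebra.
From mathcomp Require Import falgebra.
Set Implicit Arguments.
Unset Strict Implicit.
Unset Printing Implicit Defensive.
Import GRing.Theory.
Local Open Scope ring_scope.

Section Quiver.
Variables (V E : finType) (src tgt : E -> V).

Fixpoint pathb (v w : V) (p : seq E) : bool :=
  if p is b :: p' then (src b == v) && pathb (tgt b) w p' else v == w.

Definition acyclic : Prop := forall (v : V) (p : seq E), pathb v v p -> p = [::].

End Quiver.

Section Idempotents.
Variable (R : nzRingType).

Definition idempotent (x : R) : Prop := x * x = x.

Definition primitive_idempotent (x : R) : Prop :=
  [/\ idempotent x, x <> 0 &
      forall f g : R, idempotent f -> idempotent g -> f * g = 0 -> g * f = 0 ->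
        f + g = x -> f = 0 \/ g = 0].

Definition complete_prim_orth (s : nat) (e : 'I_s -> R) : Prop :=
  [/\ forall x, primitive_idempotent (e x),
      forall x y, x != y -> e x * e y = 0 &
      \sum_(x < s) e x = 1].

(* Isomorphism of right modules, for "modules" given as subsets of
   additive groups X, Y with right actions of R. *)
Definition rmod_iso (X Y : zmodType) (actX : X -> R -> X) (actY : Y -> R -> Y)
  (PX : X -> Prop) (PY : Y -> Prop) : Prop :=
  exists f : X -> Y,
  [/\ forall x, PX x -> PY (f x),
      forall x x', PX x -> PX x' -> f (x + x') = f x + f x',
      forall x r, PX x -> f (actX x r) = actY (f x) r,
      forall y, PY y -> exists x, PX x /\ f x = y &
      forall x x', PX x -> PX x' -> f x = f x' -> x = x'].

Definition rideal (e : R) : R -> Prop := fun m => exists a, m = e * a.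

Definition basic_wrt (s : nat) (e : 'I_s -> R) : Prop :=
  forall x y, x != y ->
    ~ rmod_iso (fun m r => m * r) (fun m r => m * r) (rideal (e x)) (rideal (e y)).

End Idempotents.

Section GPA.
Variables (k : fieldType) (V E : finType) (src tgt : E -> V)
          (A : V -> falgType k) (L : falgType k)
          (iota : forall v, 'Hom(A v, L)) (arr : E -> L).

(* the subspace of L spanned by the A-paths a0 b1 a1 ... br ar along the
   arrow sequence p starting at vertex v *)
Fixpoint Apath_space (v : V) (p : seq E) : {vspace L} :=
  match p with
  | [::] => (iota v @: fullv)%VS
  | b :: p' => prodv (prodv (iota v @: fullv) <[arr b]>) (Apath_space (tgt b) p')
  end.

(* sum over all paths (of the acyclic quiver) of a nat-valued weight;
   paths in an acyclic quiver have length < #|V|. *)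
Definition sum_paths (v w : V) (F : seq E -> nat) : nat :=
  (\sum_(r < #|V|) \sum_(p : r.-tuple E | pathb src tgt v w p) F p)%N.

(* (L, iota, arr) is the generalized path algebra k(Gamma, A):
   - iota v : A v -> L is k-linear, multiplicative, iota_v(1) = 1_v are
     pairwise orthogonal idempotents summing to 1 (trivial A-paths);
   - arrow alpha is the A-path 1_{s(alpha)} alpha 1_{t(alpha)};
   - L is spanned by the A-paths;
   - dim L equals the dimension of the span of A-paths modulo
     multilinearity, i.e. sum over paths of the products of dim A_v along
     the path (this expresses that there are no further relations). *)
Definition is_gen_path_algebra : Prop :=
  [/\ forall v (a b : A v), iota v (a * b) = iota v a * iota v b,
      (forall u v, u != v -> iota u 1 * iota v 1 = 0) /\
      \sum_(v : V) iota v 1 = 1,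
      forall b : E, iota (src b) 1 * arr b * iota (tgt b) 1 = arr b,
      (\sum_(v : V) \sum_(w : V) \sum_(r < #|V|)
          \sum_(p : r.-tuple E | pathb src tgt v w p) Apath_space v p)%VS = fullv &
      (\dim (fullv : {vspace L}) =
        \sum_(v : V) \sum_(w : V)
          sum_paths v w (fun p => \prod_(u <- v :: map tgt p) \dim (fullv : {vspace A u})))%N].

End GPA.

From HB Require Import structures.
From mathcomp Require Import all_boot all_order all_algebra.
From mathcomp Require Import all_field zify.
Import GRing.Theory.
Local Open Scope ring_scope.

(* The component M_l of P(i, j) is the corner e L 1_l of the generalized path algebra L,
   where e = iota_i(e_ij). L is spanned by A-paths, and e g 1_l vanishes unless the path g
   runs from i to l. For such a path of positive length, e g lies in H * A_l, where the
   "head" H = e A_i a_1 A_(i_1) ... a_r has dimension at most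
   dim(e_ij A_i) dim A_(i_1) ... dim A_(i_(r-1)); so M_l is generated as a right A_l-module
   by n_l elements. For l = i acyclicity leaves only the trivial path, so M_i = e A_i.
   These bounds hold for the corners of every pair of idempotents d_v, 1 - d_v (with
   d_i = e_ij and d_v = 1 otherwise); these corners cover L and, L having no relations,
   their bounds add up to dim L. Hence all bounds are attained: dim M_l = n_l dim A_l,
   and the surjection A_l^(n_l) -> M_l is an isomorphism. *)

Set Implicit Arguments.
Unset Strict Implicit.
Unset Printing Implicit Defensive.

Lemma eq_leq_sum (I : finType) (F G : I -> nat) :
  (forall i, F i <= G i)%N -> (\sum_i G i <= \sum_i F i)%N -> F =1 G.
Proof.
move=> leFG leGF i.
have /leqif_sum[_ /esym] := fun i (_ : true) => leqif_eq (leFG i).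
by rewrite eqn_leq leGF leq_sum // => /forallP/(_ i)/eqP.
Qed.

Section FalgebraFacts.
Variables (K : fieldType) (aT : falgType K).

Lemma dim_img_leq (rT : vectType K) (f : 'Hom(aT, rT)) (U : {vspace aT}) :
  (\dim (f @: U) <= \dim U)%N.
Proof. by rewrite -(limg_ker_dim f U) leq_addl. Qed.

Lemma prodv_mull_fixed (c : aT) (U W : {vspace aT}) :
  {in U, forall u, c * u = u} -> {in (U * W)%VS, forall x, c * x = x}.
Proof.
move=> cU x UWx; apply/eqP; rewrite -subr_eq0.
have /subvP/(_ x UWx) : (U * W <= lker (amull c - \1)%VF)%VS.
  by apply/prodvP=> u w Uu _; rewrite memv_ker !lfunE /= !lfunE /= id_lfunE mulrA cU ?subrr.
by rewrite memv_ker !lfunE /= !lfunE /= id_lfunE.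
Qed.

Lemma prodv_mulr_fixed (c : aT) (U W : {vspace aT}) :
  {in W, forall w, w * c = w} -> {in (U * W)%VS, forall x, x * c = x}.
Proof.
move=> cW x UWx; apply/eqP; rewrite -subr_eq0.
have /subvP/(_ x UWx) : (U * W <= lker (amulr c - \1)%VF)%VS.
  by apply/prodvP=> u w _ Ww; rewrite memv_ker !lfunE /= !lfunE /= id_lfunE -mulrA cW ?subrr.
by rewrite memv_ker !lfunE /= !lfunE /= id_lfunE.
Qed.

Lemma line_idem_fixed (d : aT) : d * d = d -> {in <[d]>%VS, forall u, d * u = u}.
Proof. by move=> dd _ /vlineP[a ->]; rewrite -scalerAr dd. Qed.

Lemma dim_idem_split (d : aT) : d * d = d ->
  (\dim (<[d]> * fullv) + \dim (<[1 - d]> * fullv) <= \dim (fullv : {vspace aT}))%N.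
Proof.
move=> dd; have dd' : (1 - d) * (1 - d) = 1 - d.
  by rewrite mulrBr mulr1 mulrBl mul1r dd subrr subr0.
rewrite -dimv_sum_cap; have -> : (<[d]> * fullv :&: <[1 - d]> * fullv = 0)%VS.
  apply/eqP; rewrite -subv0; apply/subvP=> x /memv_capP[dAx d'Ax].
  have dx : d * x = x := prodv_mull_fixed (line_idem_fixed dd) dAx.
  have d'x : (1 - d) * x = x := prodv_mull_fixed (line_idem_fixed dd') d'Ax.
  by rewrite memv0 -d'x -dx mulrA mulrBl mul1r dd subrr mul0r.
by rewrite dimv0 addn0 dimvS ?subvf.
Qed.

Lemma span_prodv_sub (s : seq aT) (W Z : {vspace aT}) :
  {in s, forall y, <[y]> * W <= Z}%VS -> (<<s>> * W <= Z)%VS.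
Proof.
elim: s => [|y s IHs] sWZ; first by rewrite span_nil prod0v sub0v.
rewrite span_cons prodvDl subv_add sWZ ?mem_head // IHs // => z sz.
by apply: sWZ; rewrite inE sz orbT.
Qed.

End FalgebraFacts.

Section GeneralizedPathAlgebra.
Variables (k : fieldType) (V E : finType) (src tgt : E -> V)
  (A : V -> falgType k) (L : falgType k) (iota : forall v, 'Hom(A v, L)) (arr : E -> L).
Hypothesis HL : is_gen_path_algebra src tgt iota arr.

Local Notation one v := (iota v 1).
Local Notation Aimg v := (iota v @: fullv)%VS.
Local Notation dimA v := (\dim (fullv : {vspace A v})).
Local Notation Apaths := (Apath_space tgt iota arr).
Local Notation path := (pathb src tgt).

Lemma iota_mul v (a b : A v) : iota v (a * b) = iota v a * iota v b.
Proof. by case: HL. Qed.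

Lemma iota_unitl v (a : A v) : one v * iota v a = iota v a.
Proof. by rewrite -iota_mul mul1r. Qed.

Lemma iota_unitr v (a : A v) : iota v a * one v = iota v a.
Proof. by rewrite -iota_mul mulr1. Qed.

Lemma iota_orth u v : u != v -> one u * one v = 0.
Proof. by case: HL => _ [orth _] _ _ _; apply: orth. Qed.

Lemma sum_iota_one : \sum_v one v = 1.
Proof. by case: HL => _ [_ ->]. Qed.

Fixpoint Apath_head (v : V) (p : seq E) : {vspace L} :=
  if p is b :: p' then (Aimg v * <[arr b]> * Apath_head (tgt b) p')%VS else 1%VS.

Lemma Apath_spaceE v w p : path v w p -> Apaths v p = (Apath_head v p * Aimg w)%VS.
Proof.
elim: p v => [|b p IHp] v /=; first by move=> /eqP ->; rewrite prod1v.
by case/andP=> _ /IHp ->; rewrite prodvA.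
Qed.

Lemma Apath_space_units v w p : path v w p ->
  {in Apaths v p, forall y, one v * y = y /\ y * one w = y}.
Proof.
move=> vwp y Sy; split.
  have unitl : {in Aimg v, forall u, one v * u = u}.
    by move=> _ /memv_imgP[a _ ->]; rewrite iota_unitl.
  case: p vwp Sy => [|b p] _ Sy; first exact: unitl.
  by apply: prodv_mull_fixed Sy; apply: prodv_mull_fixed.
move: Sy; rewrite (Apath_spaceE vwp); apply: prodv_mulr_fixed.
by move=> _ /memv_imgP[a _ ->]; rewrite iota_unitr.
Qed.

Lemma limg_sub_Apaths (f : 'End(L)) (Z : {vspace L}) :
  (forall v w (r : 'I_#|V|) (p : r.-tuple E), path v w p -> (f @: Apaths v p <= Z)%VS) ->
  (f @: fullv <= Z)%VS.
Proof.
case: HL => _ _ _ <- _ fZ; rewrite !limg_sum.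
apply/subv_sumP => v _; rewrite limg_sum; apply/subv_sumP => w _.
rewrite limg_sum; apply/subv_sumP => r _; rewrite limg_sum.
by apply/subv_sumP => p; apply: fZ.
Qed.

(* [corner (e i j) l] is the component M_l of the representation of P(i, j). *)
Definition corner v (c : A v) (w : V) : {vspace L} :=
  ((amulr (one w) \o amull (iota v c)) @: fullv)%VS.

Lemma mem_corner v (c : A v) (w : V) (m : L) :
  m \in corner c w <-> exists x, m = iota v c * x * one w.
Proof.
split; first by case/memv_imgP=> x _ ->; exists x; rewrite comp_lfunE !lfunE.
case=> x ->; have := memv_img (amulr (one w) \o amull (iota v c))%VF (memvf x).
by rewrite comp_lfunE !lfunE.
Qed.

Lemma corner_sub_Apaths v (c : A v) (w : V) :
  (corner c w <= \sum_(r < #|V|) \sum_(p : r.-tuple E | path v w p)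
                      <[iota v c]> * Apaths v p)%VS.
Proof.
apply: limg_sub_Apaths => v' w' r p vw'p; apply/subvP=> _ /memv_imgP[y Sy ->].
rewrite comp_lfunE !lfunE /=; have [ly ry] := Apath_space_units vw'p Sy.
have [ev | v'v] := eqVneq v' v; last first.
  have cv'0 : iota v c * one v' = 0.
    by rewrite -[iota v c]iota_unitr -mulrA iota_orth ?mulr0 // eq_sym.
  by rewrite -ly mulrA cv'0 !mul0r mem0v.
have [ew | w'w] := eqVneq w' w; last first.
  have yw0 : y * one w = 0 by rewrite -ry -mulrA iota_orth ?mulr0.
  by rewrite -mulrA yw0 mulr0 mem0v.
subst v' w'; rewrite -mulrA ry; apply: subvP (memv_mul (memv_line _) Sy).
by apply: (sumv_sup r) => //; apply: (sumv_sup p).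
Qed.

Lemma line_iota_sub v (c : A v) : (<[iota v c]> * Aimg v <= iota v @: (<[c]> * fullv))%VS.
Proof.
apply/prodvP=> u w /vlineP[a ->] /memv_imgP[b _ ->].
rewrite -scalerAl -iota_mul -linearZ.
by apply/memv_img/memvZ/memv_mul; rewrite ?memv_line ?memvf.
Qed.

Lemma dim_line_iota v (c : A v) : (\dim (<[iota v c]> * Aimg v) <= \dim (<[c]> * fullv))%N.
Proof. exact: leq_trans (dimvS (line_iota_sub c)) (dim_img_leq _ _). Qed.

Definition inner_weight (p : seq E) : nat := \prod_(b <- take (size p).-1 p) dimA (tgt b).

Definition corner_rank v (c : A v) (w : V) : nat :=
  sum_paths src tgt v w (fun p => \dim (<[c]> * fullv) * inner_weight p)%N.

Definition corner_gen v (c : A v) (w : V) : {vspace L} :=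
  (\sum_(r < #|V|) \sum_(p : r.-tuple E | path v w p) <[iota v c]> * Apath_head v p)%VS.

Lemma corner_sub_gen v (c : A v) w : (corner c w <= corner_gen c w * Aimg w)%VS.
Proof.
apply: subv_trans (corner_sub_Apaths c w) _.
apply/subv_sumP=> r _; apply/subv_sumP=> p vwp.
rewrite (Apath_spaceE vwp) prodvA; apply: prodvSl.
by apply: (sumv_sup r) => //; apply: (sumv_sup p).
Qed.

Lemma dim_Apath_head v p :
  (\dim (Apath_head v p) <= \prod_(u <- belast v (map tgt p)) dimA u)%N.
Proof.
elim: p v => [|b p IHp] v /=; first by rewrite dimv1 big_nil.
rewrite big_cons; apply: leq_trans (dim_prodv _ _) _; apply: leq_mul (IHp _).
apply: leq_trans (dim_prodv _ _) _; rewrite -[leqRHS]muln1.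
by apply: leq_mul; [apply: dim_img_leq | rewrite dim_vline leq_b1].
Qed.

Lemma dim_line_Apath_head v (c : A v) p :
  (\dim (<[iota v c]> * Apath_head v p) <= \dim (<[c]> * fullv) * inner_weight p)%N.
Proof.
case: p => [|b p] /=.
  rewrite prodv1 /inner_weight big_nil muln1 dim_vline.
  apply: leq_trans (dim_line_iota c).
  have [-> //|c0] := eqVneq (iota v c) 0; rewrite lt0n dimv_eq0.
  apply: contra_neq c0 => UI0; apply/eqP; rewrite -memv0 -UI0 -{1}[iota v c]iota_unitr.
  by apply: memv_mul; [apply: memv_line | apply: memv_img; apply: memvf].
rewrite !prodvA /inner_weight.
have -> : take (size p) (b :: p) = belast b p by elim: p b => //= b' p IHp b; rewrite IHp.
apply: leq_trans (dim_prodv _ _) _.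
rewrite -(big_map tgt xpredT (fun u => dimA u)) -belast_map.
apply: leq_mul (dim_Apath_head _ _); apply: leq_trans (dim_prodv _ _) _.
rewrite -[leqRHS]muln1 leq_mul ?dim_line_iota //.
by rewrite dim_vline leq_b1.
Qed.

Lemma dim_corner_gen v (c : A v) w : (\dim (corner_gen c w) <= corner_rank c w)%N.
Proof.
apply: leq_trans (dimv_leq_sum _ _ _) _; apply: leq_sum => r _.
apply: leq_trans (dimv_leq_sum _ _ _) _; apply: leq_sum => p _.
exact: dim_line_Apath_head.
Qed.

Lemma dim_corner_leq_rank v (c : A v) w : (\dim (corner c w) <= corner_rank c w * dimA w)%N.
Proof.
apply: leq_trans (dimvS (corner_sub_gen c w)) _; apply: leq_trans (dim_prodv _ _) _.
exact: leq_mul (dim_corner_gen c w) (dim_img_leq _ _).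
Qed.

Lemma prod_path_tgt (F : V -> nat) v w p : path v w p -> p != [::] ->
  (\prod_(b <- p) F (tgt b) = (\prod_(b <- take (size p).-1 p) F (tgt b)) * F w)%N.
Proof.
elim: p v => [//|b p IHp] v /= /andP[_ bp] _.
case: p IHp bp => [|b' p] IHp bp; first by move: bp => /eqP <-; rewrite big_seq1 big_nil mul1n.
by rewrite big_cons (IHp _ bp isT) /= big_cons mulnA.
Qed.

(* On the diagonal only the trivial path contributes, which gives a sharper bound. *)
Definition corner_bound v (c : A v) (w : V) : nat :=
  if w == v then \dim (<[c]> * fullv) else (corner_rank c w * dimA w)%N.

Lemma corner_bound_split v (d : A v) w : d * d = d ->
  (corner_bound d w + corner_bound (1 - d)%R w <=
     sum_paths src tgt v w (fun p => \prod_(u <- v :: map tgt p) dimA u))%N.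
Proof.
move=> dd; have split_dim := dim_idem_split dd; rewrite /corner_bound.
have [->|wv] := eqVneq w v.
  apply: leq_trans split_dim _.
  have V_gt0 : (0 < #|V|)%N by apply/card_gt0P; exists v.
  rewrite /sum_paths (bigD1 (Ordinal V_gt0)) //= (bigD1 [tuple]) /= ?eqxx //.
  by rewrite big_seq1 -addnA leq_addr.
rewrite /corner_rank /sum_paths !big_distrl -big_split; apply: leq_sum => r _.
rewrite !big_distrl -big_split; apply: leq_sum => p vwp /=.
have p_nil : (p : seq E) != [::].
  by apply: contra_neq wv => p0; move: vwp; rewrite p0 /= eq_sym => /eqP.
rewrite big_cons big_map (prod_path_tgt (fun u => dimA u) vwp p_nil) -/(inner_weight p).
by rewrite -!mulnDl mulnA !leq_mul2r split_dim !orbT.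
Qed.

Lemma corners_span (d : forall v, A v) :
  (fullv <= \sum_v \sum_w (corner (d v) w + corner (1 - d v) w))%VS.
Proof.
apply/subvP=> m _.
have -> : m = \sum_v \sum_w (iota v (d v) * m * one w + iota v (1 - d v) * m * one w).
  under eq_bigr => v _ do under eq_bigr => w _ do
    rewrite -mulrDl -mulrDl -linearD /= addrC subrK.
  under eq_bigr => v _ do rewrite -mulr_sumr sum_iota_one mulr1.
  by rewrite -mulr_suml sum_iota_one mul1r.
apply: memv_sumr => v _; apply: memv_sumr => w _.
by apply: memv_add; apply/mem_corner; eexists.
Qed.

Hypothesis Hac : acyclic src tgt.

Lemma corner_diag v (c : A v) : (corner c v <= iota v @: (<[c]> * fullv))%VS.
Proof.
apply: subv_trans (corner_sub_Apaths c v) _.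
apply/subv_sumP=> r _; apply/subv_sumP=> p /Hac p0.
by rewrite p0; exact: line_iota_sub.
Qed.

Lemma dim_corner_leq_bound v (c : A v) w : (\dim (corner c w) <= corner_bound c w)%N.
Proof.
rewrite /corner_bound; case: eqVneq => [->|_]; last exact: dim_corner_leq_rank.
exact: leq_trans (dimvS (corner_diag c)) (dim_img_leq _ _).
Qed.

(* The corners of d_v and 1 - d_v cover L and their bounds add up to at most dim L. *)
Lemma dim_corner_eq_bound (d : forall v, A v) : (forall v, d v * d v = d v) ->
  forall v w, \dim (corner (d v) w) = corner_bound (d v) w.
Proof.
move=> dd.
pose dimc v w := (\dim (corner (d v) w) + \dim (corner (1 - d v)%R w))%N.
pose bnd v w := (corner_bound (d v) w + corner_bound (1 - d v)%R w)%N.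
have dimc_eq : (fun vw => dimc vw.1 vw.2) =1 (fun vw => bnd vw.1 vw.2).
  apply: eq_leq_sum => [vw|]; first by rewrite leq_add ?dim_corner_leq_bound.
  rewrite -(pair_bigA _ bnd) -(pair_bigA _ dimc).
  apply: leq_trans (_ : \dim (fullv : {vspace L}) <= _)%N.
    case: HL => _ _ _ _ ->; apply: leq_sum => v _; apply: leq_sum => w _.
    exact: corner_bound_split.
  apply: leq_trans (dimvS (corners_span d)) _.
  apply: leq_trans (dimv_leq_sum _ _ _) _; apply: leq_sum => v _.
  apply: leq_trans (dimv_leq_sum _ _ _) _; apply: leq_sum => w _.
  exact: dimv_add_leqif.
move=> v w; have := dimc_eq (v, w); rewrite /dimc /bnd /=.
have := dim_corner_leq_bound (d v) w; have := dim_corner_leq_bound (1 - d v) w; lia.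
Qed.

Section LinearCombination.
Variables (w : V) (n : nat) (Y : 'I_n -> L).

Definition comb (phi : {ffun 'I_n -> A w}) : L := \sum_(t < n) Y t * iota w (phi t).

Fact comb_is_semilinear : semilinear comb.
Proof.
split=> [a phi | phi psi]; rewrite /comb.
  by rewrite scaler_sumr; apply: eq_bigr => t _; rewrite ffunE linearZ scalerAr.
by rewrite -big_split; apply: eq_bigr => t _; rewrite ffunE linearD mulrDr.
Qed.

HB.instance Definition _ :=
  GRing.isSemilinear.Build k {ffun 'I_n -> A w} L _ comb comb_is_semilinear.

End LinearCombination.

Arguments comb w {n} Y phi.

Lemma span_sub_limg_comb w (s : seq L) n : (size s <= n)%N ->
  (<<s>> * Aimg w <= limg (linfun (comb w (fun t : 'I_n => s`_t))))%VS.
Proof.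
move=> size_s; apply: span_prodv_sub => y sy.
apply/prodvP=> u b /vlineP[al ->] /memv_imgP[a _ ->]; rewrite -scalerAl memvZ //.
have ty : (index y s < n)%N by apply: leq_trans size_s; rewrite index_mem.
pose phi := [ffun t : 'I_n => if t == Ordinal ty then a else 0].
suff -> : y * iota w a = linfun (comb w (fun t : 'I_n => s`_t)) phi.
  exact: memv_img (memvf phi).
rewrite lfunE /= /comb (bigD1 (Ordinal ty)) //= big1 ?addr0 => [|t /negbTE tty].
  by rewrite ffunE eqxx nth_index.
by rewrite ffunE tty linear0 mulr0.
Qed.

(* Padded with zeros when [\dim (corner_gen x l) < corner_rank x l]. *)
Definition corner_basis i (x : A i) l : 'I_(corner_rank x l) -> L :=
  fun t => (vbasis (corner_gen x l))`_t.
Arguments corner_basis {i} x l.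

Definition corner_map i (x : A i) l : 'Hom({ffun 'I_(corner_rank x l) -> A l}, L) :=
  (amull (iota i x) \o linfun (comb l (corner_basis x l)))%VF.

Lemma corner_mapE i (x : A i) l phi :
  corner_map x l phi = iota i x * \sum_t corner_basis x l t * iota l (phi t).
Proof. by rewrite comp_lfunE !lfunE. Qed.

Lemma limg_corner_map i (x : A i) l : x * x = x -> limg (corner_map x l) = corner x l.
Proof.
move=> xx; apply/eqP; rewrite eqEsubv; apply/andP; split.
  apply/subvP=> _ /memv_imgP[phi _ ->]; apply/mem_corner.
  exists (\sum_t corner_basis x l t * iota l (phi t)).
  rewrite corner_mapE -mulrA mulr_suml; congr (_ * _).
  by apply: eq_bigr => t _; rewrite -mulrA iota_unitr.
apply/subvP=> m cm.
have -> : m = iota i x * m by case/mem_corner: cm => y ->; rewrite !mulrA -iota_mul xx.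
have /memv_imgP[phi _ ->] : m \in limg (linfun (comb l (corner_basis x l))).
  apply: (subvP (span_sub_limg_comb _ _)); first by rewrite size_tuple dim_corner_gen.
  by rewrite (span_basis (vbasisP _)); apply: (subvP (corner_sub_gen _ _)).
by have := memv_img (corner_map x l) (memvf phi); rewrite comp_lfunE lfunE.
Qed.

Lemma corner_map_inj i (x : A i) l : x * x = x -> l != i -> injective (corner_map x l).
Proof.
move=> xx li; apply/lker0P; rewrite -dimv_eq0.
pose d := dfwith (fun v => 1 : A v) x.
have idem v : d v * d v = d v by rewrite /d; case: dfwithP => [|u _]; rewrite ?mulr1.
have := dim_corner_eq_bound idem i l; rewrite /d dfwith_in /corner_bound (negbTE li).
have := limg_ker_dim (corner_map x l) fullv; rewrite capfv limg_corner_map //.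
by rewrite !dimvf /dim /= card_ord => + dimc; rewrite dimc -[X in _ = X]add0n => /addIn ->.
Qed.

Lemma corner_free i (x : A i) l : x * x = x -> l != i ->
  rmod_iso (fun (y : 'rV[A l]_(corner_rank x l)) (a : A l) => \row_t (y 0 t * a))
           (fun m a => m * iota l a) (fun _ => True)
           (fun m => exists y, m = iota i x * y * one l).
Proof.
move=> xx li; pose ffun_of_row (y : 'rV[A l]_(corner_rank x l)) := [ffun t => y 0 t].
have row_ffunK (phi : {ffun 'I_(corner_rank x l) -> A l}) : ffun_of_row (\row_t phi t) = phi.
  by apply/ffunP=> t; rewrite !ffunE mxE.
exists (fun y => corner_map x l (ffun_of_row y)); split.
- by move=> y _; apply/mem_corner; rewrite -limg_corner_map // memv_img ?memvf.
- move=> y y' _ _; rewrite -linearD; congr (corner_map _ _ _).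
  by apply/ffunP=> t; rewrite !ffunE mxE.
- move=> y a _; rewrite !corner_mapE -mulrA mulr_suml; congr (_ * _).
  by apply: eq_bigr => t _; rewrite !ffunE mxE iota_mul mulrA.
- move=> m /mem_corner; rewrite -limg_corner_map // => /memv_imgP[phi _ ->].
  by exists (\row_t phi t); rewrite row_ffunK.
- move=> y y' _ _ /corner_map_inj-/(_ xx li)/ffunP eq_yy'; apply/rowP=> t.
  by have := eq_yy' t; rewrite !ffunE.
Qed.

End GeneralizedPathAlgebra.

Unset Implicit Arguments.

Theorem proposition5p3
  (k : closedFieldType) (V E : finType) (src tgt : E -> V)
  (Hacyc : acyclic src tgt)
  (A : V -> falgType k) (s : V -> nat) (e : forall v, 'I_(s v) -> A v)
  (He : forall v, complete_prim_orth (e v))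
  (Hbasic : forall v, basic_wrt (e v))
  (L : falgType k) (iota : forall v, 'Hom(A v, L)) (arr : E -> L)
  (HL : @is_gen_path_algebra k V E src tgt A L iota arr)
  (i : V) (j : 'I_(s i)) :
  let M (l : V) : L -> Prop :=
    fun m => exists x : L, m = iota i (e i j) * x * iota l 1 in
  (forall m, M i m <-> exists a : A i, m = iota i (e i j * a)) /\
  (forall l : V, l != i ->
     let n := @sum_paths V E src tgt i l
                (fun p => (\dim (prodv <[e i j]> fullv) *
                          \prod_(b <- take (size p).-1 p) \dim (fullv : {vspace A (tgt b)}))%N)
     in rmod_iso (fun (x : 'rV[A l]_n) (a : A l) => \row_t (x 0 t * a))
                 (fun (m : L) (a : A l) => m * iota l a)
                 (fun _ => True) (M l)) /\
  (forall l : V, (forall r (p : r.-tuple E), ~~ pathb src tgt i l p) ->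
     forall m, M l m -> m = 0).
Proof.
move=> M; have xx : e i j * e i j = e i j by have [/(_ j)[]] := He i.
split; [|split].
- move=> m; split=> [/mem_corner cm | [a ->]].
    have /memv_imgP[a xA ->] := subvP (corner_diag HL Hacyc (e i j)) m cm.
    by exists a; rewrite (prodv_mull_fixed (line_idem_fixed xx) xA).
  by exists (iota i a); rewrite (iota_mul HL) -mulrA (iota_unitr HL).
- by move=> l li n; exact: (corner_free HL Hacyc xx li).
move=> l nopath m /mem_corner/(subvP (corner_sub_gen HL _ _)).
have -> : corner_gen src tgt iota arr (e i j) l = 0%VS.
  by rewrite /corner_gen big1 // => r _; rewrite big_pred0 // => p; apply/negbTE/nopath.
by rewrite prod0v memv0 => /eqP.
Qed.
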